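(* Let $L \geq 2$, $m = L+1$, $\gamma = (L+1)^3$, and for $i \in \{0,\ldots,L\}$, $k\in[m]$ let $\pi_i(A_k) = w_i(k)/\sum_{h=1}^m w_i(h)$ with $w_i(k) = \gamma^{2(i+1)k - k^2+1} + \sum_{r=0}^L\gamma^{(2r+1)(i+1)-r^2-r}$. Let $\overline{\pi}(\xi) = \prod_{i=0}^L \pi_i(A_{\xi_i})$ for $\xi\in[m]^{L+1}$, let $\lambda = (1, 2, \ldots, m)$, let $\mathcal{X}_\lambda$ be the set of states reachable from $\lambda$ by finitely many swaps of adjacent levels, and $\overline{\pi}_\lambda = \overline{\pi}/\overline{\pi}(\mathcal{X}_\lambda)$ on $\mathcal{X}_\lambda$. Let $S \subseteq \mathcal{X}_\lambda$ be the set of states $\xi$ for which there is a sequence $\lambda=\tau^0,\ldots,\tau^N=\xi$, each obtained from the previous by swapping the entries of two adjacent levels, such that every $\tau^s$ differs from $\lambda$ in at most $\lfloor\log_2 L\rfloor - 1$ coordinates, and let $S^C = \mathcal{X}_\lambda\setminus S$. Let $\overline{P}_{pt}$ be a stochastic matrix on $\mathcal{X}_\lambda$ such that $\overline{P}_{pt}(\xi,\tilde\xi) > 0$ with $\xi\neq\tilde\xi$ only if $\tilde\xi$ is obtained from $\xi$ by swapping the entries of two adjacent levels. Then $$\sum_{\xi\in S,\,\tilde\xi\in S^C}\overline{\pi}_\lambda(\xi)\overline{P}_{pt}(\xi,\tilde\xi) \leq 4e\left(\frac{1}{L+1}\right)^{\lfloor\log_2 L\rfloor - 2}.$$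
   Context: A swap of adjacent levels maps $\xi$ to $(j-1,j)\xi$, the vector with entries at positions $j-1$ and $j$ exchanged, $j\in\{1,\ldots,L\}$. Two states differ in coordinate $\ell$ if their $\ell$-th entries are unequal. In the paper $\overline{P}_{pt}$ is the projected parallel tempering chain of a hypothetical instance in which the only moves between modes are swaps of adjacent temperature levels. *)

From HB Require Import structures.
From mathcomp Require Import all_boot all_order all_algebra.
From mathcomp Require Import all_classical all_reals all_analysis.
Set Implicit Arguments. Unset Strict Implicit. Unset Printing Implicit Defensive.
Import Order.TTheory GRing.Theory Num.Theory.
Local Open Scope ring_scope.

(* Conventions: levels i in {0,..,L} are 'I_L.+1; modes A_1..A_m (m = L+1)
   are encoded 0-based: the value k : 'I_L.+1 stands for A_(k+1). *)
Definition state (L : nat) := {ffun 'I_L.+1 -> 'I_L.+1}.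

Definition lam (L : nat) : state L := [ffun i => i].

Definition swap_adj (L : nat) (j : 'I_L.+1) (xi : state L) : state L :=
  [ffun i => if i == j then xi (inord j.-1)
            else if i == inord j.-1 then xi j else xi i].

Definition adj_swap (L : nat) : rel (state L) :=
  fun xi eta => [exists j : 'I_L.+1, (0 < j)%N && (eta == swap_adj j xi)].

Definition Xlam (L : nat) : {set state L} := [set xi | connect (@adj_swap L) (lam L) xi].

Definition ndiff (L : nat) (xi : state L) : nat := #|[set i | xi i != lam L i]|.

Definition dS (L : nat) : nat := (trunc_log 2 L - 1)%N.

(* S: reachable from lambda by adjacent swaps with every intermediate state
   (lambda itself differs in 0 coordinates) differing from lambda in at most d coordinates *)
Definition Sset (L : nat) : {set state L} :=
  [set xi | connect [rel x y | adj_swap x y && (ndiff y <= dS L)%N] (lam L) xi].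

Definition SCset (L : nat) : {set state L} := Xlam L :\: Sset L.

Section Weights.
Variable R : realType.
Variable L : nat.

Definition gam : R := ((L.+1) ^ 3)%:R.

(* w_i(k) with k 1-based, i.e. k = (kk : 'I_L.+1) + 1 *)
Definition wt (i kk : 'I_L.+1) : R :=
  let k : int := (kk.+1)%:Z in
  let i1 : int := (i.+1)%:Z in
  gam ^ (2 * i1 * k - k * k + 1)
  + \sum_(r < L.+1) gam ^ ((2 * (r%:Z) + 1) * i1 - r%:Z * r%:Z - r%:Z).

Definition pii (i kk : 'I_L.+1) : R := wt i kk / \sum_(h : 'I_L.+1) wt i h.

Definition pibar (xi : state L) : R := \prod_(i : 'I_L.+1) pii i (xi i).

Definition pilam (xi : state L) : R := pibar xi / \sum_(eta in Xlam L) pibar eta.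
End Weights.

From HB Require Import structures.
From mathcomp Require Import all_boot all_order all_algebra.
From mathcomp Require Import all_classical all_reals all_analysis.
From mathcomp Require Import zify ring lra.
Import Order.TTheory GRing.Theory Num.Theory.
Local Open Scope ring_scope.

(* One adjacent swap changes at most two coordinates, so every transition
   from S to its complement starts from a state differing from lambda in at
   least D = floor(log2 L) - 2 coordinates, and the flow is at most the
   pi_lambda-mass of such states.  As pi_lambda(xi) <= pibar(xi) / pibar(lambda)
   = prod_i w_i(xi_i) / w_i(i+1), it suffices to control these ratios.
   Factoring gamma^((i+1)^2) out of w_i(k) leaves gamma^(1 - (k-i-1)^2) plus a
   term c_i <= 2 + (L+1)/gamma common to the whole row, so the off-diagonal
   ratios of row i sum to at most s = 5 / (2 (L+1)^2).  Choosing the D moved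
   coordinates first bounds the mass by C(L+1, D) s^D (1+s)^(L+1-D), and
   C(L+1, D) (5/2)^D <= 4 (L+1)^D together with (1+s)^(L+1) <= e gives
   4 e (L+1)^-D. *)

Lemma ler_sum_subpred (R : numDomainType) (I : finType) (P Q : pred I) (F : I -> R) :
  (forall i, Q i -> 0 <= F i) -> (forall i, P i -> Q i) ->
  \sum_(i | P i) F i <= \sum_(i | Q i) F i.
Proof.
move=> F_ge0 PQ; rewrite big_mkcond [leRHS]big_mkcond; apply: ler_sum => i _.
by case: ifP => [/PQ -> //|_]; case: ifP => // /F_ge0.
Qed.

Lemma sum_indicator_le1 (R : numDomainType) (n t : nat) :
  \sum_(k < n) ((k : nat) == t)%:R <= 1 :> R.
Proof.
have [t_lt_n|n_le_t] := ltnP t n.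
  rewrite (bigD1 (Ordinal t_lt_n)) //= eqxx big1 ?addr0 // => k k_neq.
  by case: eqP => // k_eq; case/eqP: k_neq; apply: val_inj.
by rewrite big1 // => k _; case: eqP => // k_eq; move: (ltn_ord k); rewrite k_eq ltnNge n_le_t.
Qed.

Lemma sum_le_two_indicators (R : numDomainType) (n a b : nat) (P : pred 'I_n)
    (e : R) (F : 'I_n -> R) :
  0 <= e -> (forall k, P k -> F k <= ((k : nat) == a)%:R + ((k : nat) == b)%:R + e) ->
  \sum_(k | P k) F k <= 2 + n%:R * e.
Proof.
move=> e_ge0 F_le; apply: le_trans (ler_sum _ F_le) _.
rewrite (le_trans (ler_sum_subpred _ _ P predT _ _ _)) //=.
  by move=> k _; rewrite !addr_ge0.
rewrite !big_split /= sumr_const card_ord mulr_natl lerD2r.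
by apply: le_trans (lerD (sum_indicator_le1 R n a) (sum_indicator_le1 R n b)) _.
Qed.

Section IntegerPowers.
Variables (R : realFieldType) (g : R).
Hypothesis g_ge1 : 1 <= g.

Lemma exprz_npos_le (x : int) : x <= 0 -> g ^ x <= (x == 0)%:R + g^-1.
Proof.
have g_gt0 : 0 < g by apply: lt_le_trans g_ge1.
move=> x_le0; have [->|x_neq0] := eqVneq x 0.
  by rewrite expr0z lerDl invr_ge0 ltW.
by rewrite add0r -exprN1; apply: ler_weXz2l; lia.
Qed.

Lemma exprz_Nmul_pred_le (r c : nat) :
  g ^ (- ((r%:Z - c%:Z) * (r%:Z - c%:Z - 1))) <= (r == c)%:R + (r == c.+1)%:R + g^-1.
Proof.
apply: (le_trans (exprz_npos_le _ _)); first by case: (leqP r c) => ?; nia.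
rewrite lerD2r; case: eqP => [prod0|_]; last by rewrite addr_ge0.
have [->|->] : r = c \/ r = c.+1 by nia.
  by rewrite eqxx lerDl.
by rewrite eqxx lerDr.
Qed.

Lemma exprz_1_sub_sqr_le (k c : nat) : k != c ->
  g ^ (1 - (k%:Z - c%:Z) * (k%:Z - c%:Z)) <= (k == c.+1)%:R + (k == c.-1)%:R + g^-1.
Proof.
move=> /eqP k_neq_c; apply: (le_trans (exprz_npos_le _ _)); first by case: (ltngtP k c) => ?; nia.
rewrite lerD2r; case: eqP => [sqr1|_]; last by rewrite addr_ge0.
have [->|->] : k = c.+1 \/ k = c.-1 by nia.
  by rewrite eqxx lerDl.
by rewrite eqxx lerDr.
Qed.

End IntegerPowers.

Section Weights.
Variables (R : realType) (L : nat).

Local Notation n := ((L.+1)%:R : R).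
Local Notation g := (gam R L).

Lemma gamE : g = n ^+ 3.
Proof. by rewrite /gam natrX. Qed.

Lemma gam_ge1 : 1 <= g.
Proof. by rewrite gamE exprn_ege1 // ler1n. Qed.

Lemma gam_gt0 : 0 < g.
Proof. exact: lt_le_trans gam_ge1. Qed.

Definition wt_common (i : 'I_L.+1) : R :=
  \sum_(r < L.+1) g ^ (- ((r%:Z - i%:Z) * (r%:Z - i%:Z - 1))).

Lemma wt_common_ge0 i : 0 <= wt_common i.
Proof. by apply: sumr_ge0 => r _; rewrite exprz_ge0 // ltW // gam_gt0. Qed.

Lemma wt_factor (i k : 'I_L.+1) :
  wt R i k = g ^ ((i.+1)%:Z * (i.+1)%:Z)
             * (g ^ (1 - (k%:Z - i%:Z) * (k%:Z - i%:Z)) + wt_common i).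
Proof.
have g_neq0 : g != 0 by rewrite gt_eqF // gam_gt0.
rewrite /wt /wt_common mulrDr mulr_sumr; congr (_ + _).
  by rewrite -expfzDr //; congr (_ ^ _); lia.
by apply: eq_bigr => r _; rewrite -expfzDr //; congr (_ ^ _); lia.
Qed.

Lemma wt_ratio (i k : 'I_L.+1) :
  wt R i k / wt R i i = (g ^ (1 - (k%:Z - i%:Z) * (k%:Z - i%:Z)) + wt_common i)
                        / (g + wt_common i).
Proof.
rewrite !wt_factor subrr mulr0 subr0 expr1z -mulf_div divff ?mul1r //.
by rewrite gt_eqF // exprz_gt0 // gam_gt0.
Qed.

Lemma wt_gt0 (i k : 'I_L.+1) : 0 < wt R i k.
Proof.
by rewrite wt_factor mulr_gt0 ?ltr_wpDr ?wt_common_ge0 ?exprz_gt0 ?gam_gt0.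
Qed.

Lemma wt_ratio_offdiag_le (i : 'I_L.+1) : (2 <= L)%N ->
  \sum_(k | k != i) wt R i k / wt R i i <= 5 / 2 / n ^+ 2.
Proof.
move=> L_ge2; have n_ge3 : 3 <= n by rewrite ler_nat; lia.
have ginv_ge0 : 0 <= g^-1 by rewrite invr_ge0 ltW // gam_gt0.
have common_le : wt_common i <= 2 + n * g^-1.
  by apply: sum_le_two_indicators => // r _; apply: exprz_Nmul_pred_le gam_ge1 _ _.
have lead_le : \sum_(k | k != i) g ^ (1 - (k%:Z - i%:Z) * (k%:Z - i%:Z)) <= 2 + n * g^-1.
  by apply: sum_le_two_indicators => // k; apply: exprz_1_sub_sqr_le gam_ge1 _ _.
under eq_bigr do rewrite wt_ratio.
rewrite -mulr_suml big_split /= sumr_const cardC1 card_ord /=.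
rewrite ler_pdivrMr ?ltr_wpDr ?wt_common_ge0 ?gam_gt0 //.
apply: (@le_trans _ _ (n * (2 + n * g^-1))).
  by rewrite mulr_natl mulrS lerD // lerMn2r common_le orbT.
have n_neq0 : n != 0 by rewrite pnatr_eq0.
apply: (@le_trans _ _ (5 / 2 / n ^+ 2 * g)); last first.
  by rewrite ler_wpM2l ?lerDl ?wt_common_ge0 // divr_ge0 ?exprn_ge0 //; lra.
have -> : n * (2 + n / g) = 2 * n + n^-1 by rewrite gamE; field.
have -> : 5 / 2 / n ^+ 2 * g = 5 / 2 * n by rewrite gamE; field.
have : n^-1 <= 1 by rewrite invf_le1; lra.
by move: n^-1 => m; lra.
Qed.

End Weights.

Section ProductWeights.
Variables (R : numDomainType) (I J : finType) (c : I -> J) (f : I -> J -> R) (s : R).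
Hypotheses (f_ge0 : forall i k, 0 <= f i k) (f_base : forall i, f i (c i) = 1)
  (f_off_le : forall i, \sum_(k | k != c i) f i k <= s).

Definition devset (x : {ffun I -> J}) : {set I} := [set i | x i != c i].

Lemma prod_weight_ge0 (x : {ffun I -> J}) : 0 <= \prod_i f i (x i).
Proof. by apply: prodr_ge0 => i _; apply: f_ge0. Qed.

Lemma sum_prod_devset_superset_le (A : {set I}) :
  \sum_(x | A \subset devset x) \prod_i f i (x i) <= s ^+ #|A| * (1 + s) ^+ (#|I| - #|A|).
Proof.
rewrite (eq_bigl (fun x => x \in family (fun i k => (i \in A) ==> (k != c i)))); last first.
  move=> x; apply/fintype.subsetP/familyP => [A_dev i|x_fam i iA].
    by apply/implyP => /A_dev; rewrite inE.
  by rewrite inE; move/implyP: (x_fam i); apply.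
rewrite -(bigA_distr_big_dep _ f) /=.
apply: (@le_trans _ _ (\prod_i (if i \in A then s else 1 + s))).
  apply: ler_prod => i _; rewrite sumr_ge0 //=; case: (i \in A) => /=.
    exact: f_off_le.
  by rewrite (bigD1 (c i)) //= f_base lerD2l f_off_le.
rewrite (bigID (mem A)) /= (eq_bigr (fun=> s)) => [|i -> //].
rewrite [X in _ * X](eq_bigr (fun=> 1 + s)) => [|i /negbTE -> //].
by rewrite !prodr_const -(cardC A) addKn.
Qed.

Lemma sum_prod_far_le (D : nat) :
  \sum_(x | (D <= #|devset x|)%N) \prod_i f i (x i)
    <= 'C(#|I|, D)%:R * s ^+ D * (1 + s) ^+ (#|I| - D).
Proof.
apply: (@le_trans _ _ (\sum_x \sum_(A : {set I} | (A \subset devset x) && (#|A| == D))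
                          \prod_i f i (x i))).
  rewrite [leRHS](bigID (fun x => D <= #|devset x|)%N) /= ler_wpDr //.
    by apply: sumr_ge0 => x _; apply: sumr_ge0 => A _; apply: prod_weight_ge0.
  apply: ler_sum => x D_le.
  rewrite (eq_bigl (fun A => A \in [set A : {set I} | A \subset devset x & #|A| == D]));
    last by move=> A; rewrite inE.
  by rewrite sumr_const cards_draws -mulr_natr ler_peMr ?prod_weight_ge0 // ler1n bin_gt0.
rewrite (exchange_big_dep (fun A : {set I} => #|A| == D)) /=; last by move=> x A _ /andP[].
apply: (@le_trans _ _ (\sum_(A : {set I} | #|A| == D) s ^+ D * (1 + s) ^+ (#|I| - D))).
  apply: ler_sum => A /eqP A_card; rewrite -A_card.
  rewrite (eq_bigl (fun x => A \subset devset x)) => [|x]; last by rewrite A_card eqxx andbT.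
  exact: sum_prod_devset_superset_le.
rewrite (eq_bigl (fun A => A \in [set A : {set I} | #|A| == D])); last by move=> A; rewrite inE.
by rewrite sumr_const card_draws -mulrA mulr_natl.
Qed.

End ProductWeights.

Lemma ffact_le_expn (m D : nat) : (m ^_ D <= m ^ D)%N.
Proof.
rewrite ffact_prod -[in (m ^ D)%N](card_ord D) -prod_nat_const.
by apply: leq_prod => i _; apply: leq_subr.
Qed.

Lemma expn5_le_fact (D : nat) : (5 ^ D <= 4 * 2 ^ D * D`!)%N.
Proof.
elim: D => [|[|[|D]] IH] //; move: IH.
by rewrite !expnS !factS; move: (5 ^ D)%N (2 ^ D)%N D`! => a b c; nia.
Qed.

Lemma bin_expn5_le (m D : nat) : ('C(m, D) * 5 ^ D <= 4 * 2 ^ D * m ^ D)%N.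
Proof.
apply: (@leq_trans ('C(m, D) * (4 * 2 ^ D * D`!))); first by rewrite leq_mul2l expn5_le_fact orbT.
by rewrite mulnCA bin_ffact leq_mul2l ffact_le_expn orbT.
Qed.

Lemma bin_far_mass_le (R : realType) (m D : nat) : (3 <= m)%N ->
  'C(m, D)%:R * (5 / 2 / m%:R ^+ 2) ^+ D * (1 + 5 / 2 / m%:R ^+ 2) ^+ (m - D)
    <= 4 * expR 1 * (m%:R^-1 : R) ^+ D.
Proof.
move=> m_ge3; set x : R := m%:R; set s : R := 5 / 2 / x ^+ 2.
have x_ge3 : 3 <= x by rewrite ler_nat.
have s_ge0 : 0 <= s by rewrite divr_ge0 ?exprn_ge0 //; lra.
have tail_le : (1 + s) ^+ (m - D) <= expR 1.
  apply: (@le_trans _ _ ((1 + s) ^+ m)); first by rewrite ler_weXn2l ?leq_subr // lerDl.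
  apply: (@le_trans _ _ (expR s ^+ m)).
    by rewrite lerXn2r ?nnegrE ?expR_ge1Dx //; lra.
  rewrite -expRM_natl ler_expR -/x /s.
  have -> : x * (5 / 2 / x ^+ 2) = 5 / 2 / x by field; rewrite gt_eqF //; lra.
  by rewrite ler_pdivrMr; lra.
have head_le : 'C(m, D)%:R * s ^+ D <= 4 * x^-1 ^+ D.
  have -> : s = 5 / 2 / x * x^-1 by rewrite /s expr2 invfM mulrA.
  rewrite exprMn mulrA ler_pM2r ?exprn_gt0 ?invr_gt0 //; last by lra.
  rewrite !expr_div_n mulrA ler_pdivrMr ?exprn_gt0 //; last by lra.
  rewrite mulrA ler_pdivrMr ?exprn_gt0 //.
  have := bin_expn5_le m D; rewrite -(ler_nat R) !natrM !natrX -/x.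
  by rewrite [_ * x ^+ D]mulrAC.
by rewrite [leRHS]mulrAC ler_pM ?mulr_ge0 ?exprn_ge0 //; lra.
Qed.

Lemma exprz_inv_subn_le (R : realFieldType) (x : R) (t k : nat) : 1 <= x ->
  x^-1 ^+ (t - k) <= x^-1 ^ (t%:Z - k%:Z).
Proof. by move=> x_ge1; rewrite exprnP !exprz_inv; apply: ler_weXz2l => //; lia. Qed.

Lemma ndiff_adj_swap {L : nat} {xi eta : state L} :
  adj_swap xi eta -> (ndiff eta <= ndiff xi + 2)%N.
Proof.
case/existsP => j /andP[_ /eqP ->].
have sub : [set i | swap_adj j xi i != lam L i]
           \subset [set i | xi i != lam L i] :|: [set j; inord j.-1].
  apply/fintype.subsetP => i; rewrite !inE ffunE.
  by case: (i =P j) => [->|_]; [|case: (i =P inord j.-1) => [->|_]]; rewrite ?eqxx ?orbT ?orbF.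
apply: leq_trans (subset_leq_card sub) _.
by rewrite cardsU /ndiff (leq_trans (leq_subr _ _)) // leq_add2l cards2; case: (_ != _).
Qed.

Lemma Sset_sub_Xlam {L : nat} : {subset Sset L <= Xlam L}.
Proof.
move=> xi; rewrite !inE; apply: connect_sub => x y /andP[x_y _].
exact: connect1.
Qed.

Lemma Sset_adj_swap {L : nat} {xi eta : state L} : xi \in Sset L ->
  adj_swap xi eta -> (ndiff eta <= dS L)%N -> eta \in Sset L.
Proof.
rewrite !inE => xiS xi_eta eta_near; apply: connect_trans xiS _.
by apply: connect1; rewrite /= xi_eta eta_near.
Qed.

Section Stationary.
Variables (R : realType) (L : nat).

Lemma wt_sum_gt0 (i : 'I_L.+1) : 0 < \sum_(h : 'I_L.+1) wt R i h.
Proof.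
rewrite (bigD1 i) //=; apply: ltr_wpDr; last exact: wt_gt0.
by apply: sumr_ge0 => h _; apply: ltW (wt_gt0 _ _ _ _).
Qed.

Lemma pibar_gt0 (xi : state L) : 0 < pibar R xi.
Proof. by apply: prodr_gt0 => i _; rewrite divr_gt0 ?wt_gt0 ?wt_sum_gt0. Qed.

Lemma pilam_ge0 (xi : state L) : 0 <= pilam R xi.
Proof.
apply: divr_ge0; first exact: ltW (pibar_gt0 _).
by apply: sumr_ge0 => eta _; apply: ltW (pibar_gt0 _).
Qed.

Lemma pilam_le_prod_ratio (xi : state L) :
  pilam R xi <= \prod_i (wt R i (xi i) / wt R i (lam L i)).
Proof.
have lam_X : lam L \in Xlam L by rewrite inE connect0.
have Z_ge : pibar R (lam L) <= \sum_(eta in Xlam L) pibar R eta.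
  rewrite (bigD1 (lam L)) //= lerDl.
  by apply: sumr_ge0 => eta _; apply: ltW (pibar_gt0 _).
apply: (@le_trans _ _ (pibar R xi / pibar R (lam L))).
  apply: ler_wpM2l; first exact: ltW (pibar_gt0 _).
  by rewrite lef_pV2 ?posrE ?pibar_gt0 // (lt_le_trans (pibar_gt0 _) Z_ge).
rewrite le_eqVlt /pibar -prodf_div (eq_bigr (fun i => wt R i (xi i) / wt R i (lam L i))) ?eqxx //.
move=> i _.
have := wt_sum_gt0 i; have := wt_gt0 R L i (xi i); have := wt_gt0 R L i (lam L i).
by rewrite /pii; move=> *; field; rewrite !gt_eqF.
Qed.

End Stationary.

Section Flow.
Variables (R : realType) (L : nat) (P : state L -> state L -> R).
Hypotheses
  (P_nonneg : forall xi eta, xi \in Xlam L -> eta \in Xlam L -> 0 <= P xi eta)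
  (P_stoch : forall xi, xi \in Xlam L -> \sum_(eta in Xlam L) P xi eta = 1)
  (P_supp : forall xi eta, xi \in Xlam L -> eta \in Xlam L -> xi != eta ->
              0 < P xi eta -> adj_swap xi eta).

Lemma P_to_SCset_eq0 {xi eta : state L} : xi \in Sset L ->
  (ndiff xi + 2 <= dS L)%N -> eta \in SCset L -> P xi eta = 0.
Proof.
move=> xiS xi_deep; rewrite inE => /andP[etaNS etaX].
have xiX : xi \in Xlam L := Sset_sub_Xlam _ xiS.
have xi_neq_eta : xi != eta by apply: contraNneq etaNS => <-.
apply/eqP; rewrite eq_le P_nonneg // andbT leNgt; apply: contraNN etaNS => P_gt0.
have xi_eta := P_supp _ _ xiX etaX xi_neq_eta P_gt0.
by rewrite (Sset_adj_swap xiS xi_eta) // (leq_trans (ndiff_adj_swap xi_eta)).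
Qed.

Lemma flow_to_SCset_le (xi : state L) : xi \in Sset L ->
  \sum_(eta in SCset L) pilam R xi * P xi eta
    <= if (dS L - 1 <= ndiff xi)%N then pilam R xi else 0.
Proof.
move=> xiS; have xiX : xi \in Xlam L := Sset_sub_Xlam _ xiS.
case: leqP => [_|xi_deep].
  rewrite -mulr_sumr ler_piMr ?pilam_ge0 // -(P_stoch _ xiX).
  apply: ler_sum_subpred => [eta|eta]; first exact: P_nonneg.
  by rewrite inE => /andP[].
rewrite big1 // => eta etaSC; rewrite (P_to_SCset_eq0 xiS _ etaSC) ?mulr0 //.
by move: xi_deep; lia.
Qed.

End Flow.

Theorem lemma15 (R : realType) (L : nat) (hL : (2 <= L)%N)
  (P : state L -> state L -> R)
  (P_nonneg : forall xi eta, xi \in Xlam L -> eta \in Xlam L -> 0 <= P xi eta)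
  (P_stoch : forall xi, xi \in Xlam L -> \sum_(eta in Xlam L) P xi eta = 1)
  (P_supp : forall xi eta, xi \in Xlam L -> eta \in Xlam L -> xi != eta ->
              0 < P xi eta -> adj_swap xi eta) :
  \sum_(xi in Sset L) \sum_(eta in SCset L) pilam R xi * P xi eta
    <= 4 * expR 1 * ((L.+1)%:R^-1) ^ ((trunc_log 2 L)%:Z - 2).
Proof.
set D := (dS L - 1)%N.
set s : R := 5 / 2 / (L.+1)%:R ^+ 2.
have ratio_ge0 i k : 0 <= wt R i k / wt R i (lam L i).
  by apply: divr_ge0; apply: ltW; apply: wt_gt0.
have ratio_base i : wt R i (lam L i) / wt R i (lam L i) = 1.
  by apply: divff; rewrite gt_eqF ?wt_gt0.
have ratio_off_le i : \sum_(k | k != lam L i) wt R i k / wt R i (lam L i) <= s.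
  by rewrite ffunE; apply: wt_ratio_offdiag_le.
apply: (@le_trans _ _ (\sum_(xi in Sset L) if (D <= ndiff xi)%N then pilam R xi else 0)).
  by apply: ler_sum => xi xiS; apply: flow_to_SCset_le.
rewrite -big_mkcondr /=.
apply: (@le_trans _ _ (\sum_(xi | (D <= ndiff xi)%N) \prod_i (wt R i (xi i) / wt R i (lam L i)))).
  apply: le_trans (ler_sum _ (fun xi _ => pilam_le_prod_ratio _ _ xi)) _.
  apply: ler_sum_subpred => [xi _|xi /andP[] //].
  by apply: prodr_ge0 => i _.
apply: le_trans (sum_prod_far_le _ _ _ _ _ _ ratio_ge0 ratio_base ratio_off_le D) _.
rewrite card_ord; apply: le_trans (bin_far_mass_le R L.+1 D hL) _.
rewrite ler_pM2l ?mulr_gt0 ?expR_gt0 // /D /dS -subnDA.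
by apply: exprz_inv_subn_le; rewrite ler1n.
Qed.
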